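(* Let $R_7$ be the graph with vertex set $\{u_1,u_2,u_3,w_1,w_2,w_3,w_4\}$ and edge set $\{u_1u_2,u_2u_3,u_1w_1,u_1w_2,u_2w_1,u_2w_2,u_2w_3,u_2w_4,u_3w_3,u_3w_4\}$, and let $T_{10}$ be the graph with vertex set $\{x,v_1,\dots,v_{20}\}$ and edge set $\{xv_i:1\le i\le 20\}\cup\{v_{2i-1}v_{2i}:1\le i\le 10\}$. Let $\psi$ be a proper edge-colouring of the vertex-disjoint union of $R_7$ and $T_{10}$. Then there exist triangles $Q_1\subseteq T_{10}$ and $Q_2\subseteq R_7$ such that $\psi(E(Q_1))\cap\psi(E(Q_2))=\emptyset$.
   Context: An edge-colouring is proper if adjacent edges receive distinct colours. *)

From mathcomp Require Import all_boot.
Set Implicit Arguments. Unset Strict Implicit. Unset Printing Implicit Defensive.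

(* R_7 on 'I_7 with u1=0, u2=1, u3=2, w1=3, w2=4, w3=5, w4=6. *)
Definition R7_edges : seq (nat * nat) :=
  [:: (0,1); (1,2); (0,3); (0,4); (1,3); (1,4); (1,5); (1,6); (2,5); (2,6)].

Definition R7adj (a b : 'I_7) : bool :=
  ((val a, val b) \in R7_edges) || ((val b, val a) \in R7_edges).

(* T_10 on 'I_21 with x=0 and v_i = i (1 <= i <= 20).
   Edges: x v_i, and v_{2i-1} v_{2i} (i.e. {a, a+1} with a odd). *)
Definition T10adj (a b : 'I_21) : bool :=
  [|| (val a == 0) && (val b != 0),
      (val b == 0) && (val a != 0),
      odd (val a) && (val b == (val a).+1)
    | odd (val b) && (val a == (val b).+1)].

Definition UV : finType := ('I_7 + 'I_21)%type.

Definition Uadj (x y : UV) : bool :=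
  match x, y with
  | inl a, inl b => R7adj a b
  | inr a, inr b => T10adj a b
  | _, _ => false
  end.

(* An edge-colouring with colours in C, represented by a function on ordered
   pairs that is symmetric on edges (only values on edges matter). *)
Definition edge_colouring (V : Type) (adj : V -> V -> bool) (C : Type)
  (psi : V -> V -> C) : Prop :=
  forall x y, adj x y -> psi x y = psi y x.

Definition proper_edge_colouring (V : eqType) (adj : V -> V -> bool) (C : Type)
  (psi : V -> V -> C) : Prop :=
  edge_colouring adj psi /\
  forall x y z, adj x y -> adj x z -> y != z -> psi x y <> psi x z.

Definition triangle (V : Type) (adj : V -> V -> bool) (a b c : V) : Prop :=
  adj a b /\ adj b c /\ adj a c.

Definition tri_colours (V : Type) (C : Type) (psi : V -> V -> C) (a b c : V)
  : C -> Prop :=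
  fun k => k = psi a b \/ k = psi b c \/ k = psi a c.

(* T_10 consists of ten triangles x v_(2i+1) v_(2i+2) sharing the hub x; their
   twenty spokes x v_j have pairwise distinct colours, so the colour of an edge
   of R_7 is a spoke colour of at most one of them ("blocks" at most one).
   - If some T_10 triangle is blocked by no edge of R_7, its spokes avoid every
     colour of R_7, and it suffices that its pair edge misses the colours of
     some triangle of R_7.  This holds for every colour: the colour classes are
     matchings, and a matching meeting all four triangles of R_7 would contain
     two distinct edges at u_2 (lemma [shared_edge_colour]).
   - Otherwise the ten edges of R_7 block the ten triangles of T_10 bijectively
     (lemma [blocking_bijection]); hence the edges of R_7 have distinct colours
     and the triangle blocked by u_1w_1 is blocked by nothing else.  Its spokes
     avoid the colours of the edge-disjoint triangles u_1u_2w_2 and u_2u_3w_3,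
     and its pair edge cannot share a colour with both of them. *)

From mathcomp Require Import all_boot zify.
From Stdlib Require Import Classical ClassicalEpsilon.
Set Implicit Arguments. Unset Strict Implicit. Unset Printing Implicit Defensive.

Notation o7 n := (@Ordinal 7 n isT).
Notation o10 n := (@Ordinal 10 n isT).

Section ProperColouring.

Variables (V : eqType) (adj : V -> V -> bool) (C : Type) (phi : V -> V -> C).
Hypothesis phi_proper : proper_edge_colouring adj phi.

Lemma tri_colours_swap a b c k :
  tri_colours phi a b c k -> adj a b -> tri_colours phi b a c k.
Proof.
have [sym _] := phi_proper.
by move=> [->|[->|->]] ab; [left; rewrite sym | right; right | right; left].
Qed.

(* If a colour occurs on two triangles abc and abd sharing the edge ab, then
   it occurs on an edge at b: both occurrences cannot avoid b, since two edges
   at a have distinct colours. *)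
Lemma shared_edge_colour a b c d k :
  tri_colours phi a b c k -> tri_colours phi a b d k ->
  adj a b -> adj a c -> adj a d -> c != d ->
  k = phi b a \/ k = phi b c \/ k = phi b d.
Proof.
have [sym distinct] := phi_proper.
move=> kabc kabd ab ac ad cd; case: kabc => [->|[->|kac]].
- by left; rewrite sym.
- by right; left.
case: kabd => [->|[->|kad]]; first by left; rewrite sym.
  by right; right.
by case: (distinct a c d ac ad cd); rewrite -kac.
Qed.

End ProperColouring.

Lemma proper_restrict_R7 (C : Type) (psi : UV -> UV -> C) :
  proper_edge_colouring Uadj psi ->
  proper_edge_colouring R7adj (fun a b => psi (inl a) (inl b)).
Proof.
move=> [sym distinct]; split=> [a b ab | a b c ab ac bc]; first exact: sym.
by apply: distinct => //; apply: contraNneq bc => -[].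
Qed.

Lemma proper_restrict_T10 (C : Type) (psi : UV -> UV -> C) :
  proper_edge_colouring Uadj psi ->
  proper_edge_colouring T10adj (fun a b => psi (inr a) (inr b)).
Proof.
move=> [sym distinct]; split=> [a b ab | a b c ab ac bc]; first exact: sym.
by apply: distinct => //; apply: contraNneq bc => -[].
Qed.

Lemma blocking_bijection (I : finType) (blocks : I -> I -> Prop) :
  (forall j i i', blocks j i -> blocks j i' -> i = i') ->
  (forall i, exists j, blocks j i) ->
  exists2 h : I -> I, injective h & forall j i, blocks j i <-> i = h j.
Proof.
move=> unique all_blocked.
have [g blocks_g] := ClassicalEpsilon.choice (fun i j => blocks j i) all_blocked.
have g_inj : injective g.
  by move=> i i' gii'; apply: (unique (g i)); rewrite // gii'.
have [h gK hK] := injF_bij g_inj.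
have blocks_h j : blocks j (h j) by have := blocks_g (h j); rewrite hK.
exists h; first exact: can_inj hK.
by move=> j i; split=> [/(unique _ _ _ (blocks_h j)) | ->].
Qed.

Definition r7_edge (j : 'I_10) : 'I_7 * 'I_7 :=
  match val j with
  | 0 => (o7 0, o7 1) | 1 => (o7 1, o7 2) | 2 => (o7 0, o7 3)
  | 3 => (o7 0, o7 4) | 4 => (o7 1, o7 3) | 5 => (o7 1, o7 4)
  | 6 => (o7 1, o7 5) | 7 => (o7 1, o7 6) | 8 => (o7 2, o7 5)
  | _ => (o7 2, o7 6)
  end.

Lemma r7_edge_nth j :
  (val (r7_edge j).1, val (r7_edge j).2) = nth (0, 0) R7_edges j.
Proof. by case: j => [[|[|[|[|[|[|[|[|[|[|j]]]]]]]]]] hj]. Qed.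

Lemma r7_edge_onto (a b : 'I_7) :
  R7adj a b -> exists j, r7_edge j = (a, b) \/ r7_edge j = (b, a).
Proof.
have edge_of x y : (val x, val y) \in R7_edges -> exists j, r7_edge j = (x, y).
  move=> xy; have j_lt : index (val x, val y) R7_edges < 10 by rewrite index_mem.
  exists (Ordinal j_lt); have := r7_edge_nth (Ordinal j_lt).
  rewrite /= nth_index //; case: (r7_edge _) => u v /= -[eu ev].
  by congr pair; apply: val_inj.
by case/orP=> /edge_of [j ej]; exists j; [left | right].
Qed.

Section R7.

Variables (C : Type) (phi : 'I_7 -> 'I_7 -> C).
Hypothesis phi_proper : proper_edge_colouring R7adj phi.

Definition r7_colour (j : 'I_10) : C := phi (r7_edge j).1 (r7_edge j).2.

Lemma r7_triangle_colour a b c k :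
  triangle R7adj a b c -> tri_colours phi a b c k -> exists j, k = r7_colour j.
Proof.
have [sym _] := phi_proper.
have edge_colour x y : R7adj x y -> exists j, phi x y = r7_colour j.
  move=> xy; have [j [] ej] := r7_edge_onto xy; exists j; rewrite /r7_colour ej //=.
  exact: sym.
by move=> [ab [bc ac]] [->|[->|->]]; apply: edge_colour.
Qed.

(* No colour occurs on all four triangles u1u2w1, u1u2w2, u2u3w3, u2u3w4:
   by [shared_edge_colour] it would occur on an edge u2u1, u2w1 or u2w2 and
   also on an edge u2u3, u2w3 or u2w4. *)
Lemma R7_no_colour_on_all_triangles k :
  tri_colours phi (o7 0) (o7 1) (o7 3) k -> tri_colours phi (o7 0) (o7 1) (o7 4) k ->
  tri_colours phi (o7 1) (o7 2) (o7 5) k -> tri_colours phi (o7 1) (o7 2) (o7 6) k ->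
  False.
Proof.
have [_ distinct] := phi_proper.
move=> k013 k014 /(tri_colours_swap phi_proper)/(_ isT) k215
                /(tri_colours_swap phi_proper)/(_ isT) k216.
have [e1|[e1|e1]] := shared_edge_colour phi_proper k013 k014 isT isT isT isT;
have [e2|[e2|e2]] := shared_edge_colour phi_proper k215 k216 isT isT isT isT;
by rewrite e1 in e2; apply: (distinct _ _ _ _ _ _ e2).
Qed.

Lemma R7_triangle_missing_colour k :
  exists a b c, triangle R7adj a b c /\ ~ tri_colours phi a b c k.
Proof.
apply: NNPP => none.
have on_all a b c : triangle R7adj a b c -> tri_colours phi a b c k.
  by move=> abc; apply: NNPP => miss; apply: none; exists a, b, c.
by apply: R7_no_colour_on_all_triangles; apply: on_all.
Qed.

End R7.

Definition hub : 'I_21 := @Ordinal 21 0 isT.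
Definition leaf (i : 'I_10) (s : bool) : 'I_21 := inord (2 * i + s).+1.

Lemma leafE i s : val (leaf i s) = (2 * i + s).+1.
Proof. by rewrite /= inordK //; have := ltn_ord i; case: s; lia. Qed.

Lemma T10_triangle i : triangle T10adj hub (leaf i false) (leaf i true).
Proof. by rewrite /triangle /T10adj !leafE /= oddD oddM addn0 addn1 eqxx. Qed.

Section T10.

Variables (C : Type) (chi : 'I_21 -> 'I_21 -> C).
Hypothesis chi_proper : proper_edge_colouring T10adj chi.

Definition spoke_colour (i : 'I_10) (k : C) : Prop :=
  k = chi hub (leaf i false) \/ k = chi hub (leaf i true).

Definition pair_colour (i : 'I_10) : C := chi (leaf i false) (leaf i true).

(* The twenty spokes meet at the hub, so a colour is a spoke colour of at
   most one triangle. *)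
Lemma spoke_colour_unique i i' k :
  spoke_colour i k -> spoke_colour i' k -> i = i'.
Proof.
have [_ distinct] := chi_proper.
have hub_leaf j s : T10adj hub (leaf j s) by rewrite /T10adj leafE.
suff same s s' : chi hub (leaf i s) = chi hub (leaf i' s') -> i = i'.
  by move=> [->|->] [|]; apply: same.
case: (leaf i s =P leaf i' s') => [/(congr1 val)|neq eq_col].
  rewrite !leafE => eq_val _; apply: val_inj => /=.
  by case: s s' eq_val => -[] /=; lia.
by case: (distinct _ _ _ (hub_leaf i s) (hub_leaf i' s') (introN eqP neq)).
Qed.

End T10.

Section Claim.

Variables (C : Type) (phi : 'I_7 -> 'I_7 -> C) (chi : 'I_21 -> 'I_21 -> C).
Hypothesis phi_proper : proper_edge_colouring R7adj phi.
Hypothesis chi_proper : proper_edge_colouring T10adj chi.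

Definition disjoint_colour_triangles : Prop :=
  exists (a1 b1 c1 : 'I_21) (a2 b2 c2 : 'I_7),
    triangle T10adj a1 b1 c1 /\ triangle R7adj a2 b2 c2 /\
    ~ (exists k : C, tri_colours chi a1 b1 c1 k /\ tri_colours phi a2 b2 c2 k).

Lemma witness_triangles i a b c :
  triangle R7adj a b c ->
  (forall k, tri_colours phi a b c k -> ~ spoke_colour chi i k) ->
  ~ tri_colours phi a b c (pair_colour chi i) ->
  disjoint_colour_triangles.
Proof.
move=> abc no_spoke no_pair.
exists hub, (leaf i false), (leaf i true), a, b, c.
split; first exact: T10_triangle.
split=> // -[k [[e|[e|e]] kabc]]; have := no_spoke k kabc.
- by apply; left.
- by move=> _; apply: no_pair; rewrite /pair_colour -e.
- by apply; right.
Qed.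

Lemma unblocked_case i :
  (forall j, ~ spoke_colour chi i (r7_colour phi j)) -> disjoint_colour_triangles.
Proof.
move=> unblocked.
have [a [b [c [abc miss]]]] := R7_triangle_missing_colour phi_proper (pair_colour chi i).
apply: (witness_triangles abc _ miss) => k kabc.
by have [j ->] := r7_triangle_colour phi_proper abc kabc; apply: unblocked.
Qed.

Lemma all_blocked_case :
  (forall i, exists j, spoke_colour chi i (r7_colour phi j)) ->
  disjoint_colour_triangles.
Proof.
move=> blocked.
have [h h_inj blocksE] := blocking_bijection
  (fun j i i' => @spoke_colour_unique _ _ chi_proper i i' (r7_colour phi j)) blocked.
have colour_inj j j' : r7_colour phi j = r7_colour phi j' -> j = j'.
  move=> eq_col; apply: h_inj; apply/blocksE; rewrite -eq_col.
  exact/blocksE.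
set i0 := h (o10 2).
have only_u1w1 j : val j != 2 -> ~ spoke_colour chi i0 (r7_colour phi j).
  by move=> j2 /blocksE /h_inj ej; rewrite -ej in j2.
have colours014 k : tri_colours phi (o7 0) (o7 1) (o7 4) k ->
    exists2 j : 'I_10, val j \in [:: 0; 5; 3] & k = r7_colour phi j.
  by case=> [->|[->|->]]; [exists (o10 0) | exists (o10 5) | exists (o10 3)].
have colours125 k : tri_colours phi (o7 1) (o7 2) (o7 5) k ->
    exists2 j : 'I_10, val j \in [:: 1; 8; 6] & k = r7_colour phi j.
  by case=> [->|[->|->]]; [exists (o10 1) | exists (o10 8) | exists (o10 6)].
have t014 : triangle R7adj (o7 0) (o7 1) (o7 4) by [].
have t125 : triangle R7adj (o7 1) (o7 2) (o7 5) by [].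
case: (classic (tri_colours phi (o7 0) (o7 1) (o7 4) (pair_colour chi i0)))
  => [/colours014 [j1 j1in e1] | miss014]; last first.
  apply: (witness_triangles t014 _ miss014) => k /colours014 [j jin ->].
  by apply: only_u1w1; apply: contraTneq jin => ->.
apply: (witness_triangles t125) => [k /colours125 [j jin ->] | ].
  by apply: only_u1w1; apply: contraTneq jin => ->.
case/colours125=> j2 j2in; rewrite e1 => /colour_inj ej.
by move: j1in j2in; rewrite ej !inE; case/or3P=> /eqP ->.
Qed.

Lemma disjoint_colour_triangles_exist : disjoint_colour_triangles.
Proof.
case: (classic (forall i, exists j, spoke_colour chi i (r7_colour phi j))).
  exact: all_blocked_case.
case/not_all_ex_not=> i unblocked; apply: (unblocked_case (i := i)) => j blocks.
by apply: unblocked; exists j.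
Qed.

End Claim.

Theorem claim5p3 (C : Type) (psi : UV -> UV -> C) :
  proper_edge_colouring Uadj psi ->
  exists (a1 b1 c1 : 'I_21) (a2 b2 c2 : 'I_7),
    triangle T10adj a1 b1 c1 /\ triangle R7adj a2 b2 c2 /\
    ~ (exists k : C,
         tri_colours psi (inr a1) (inr b1) (inr c1) k /\
         tri_colours psi (inl a2) (inl b2) (inl c2) k).
Proof.
move=> psi_proper.
exact: (disjoint_colour_triangles_exist (proper_restrict_R7 psi_proper)
                                        (proper_restrict_T10 psi_proper)).
Qed.
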